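(* Fix $S\in\mathbb{R}^{K_0\times K_1}$, $\gamma_{(0)}$ and $\theta=(\theta^{(1)},\dots,\theta^{(N)})$ with $\theta^{(n)}\in\mathbb{P}_L^{K_n\times K_{n+1}}$ having all entries positive. For $n=1,\dots,N$ define $A_{(n)}\in\mathbb{R}^{K_{n+1}\times K_n}$ by $\{A_{(n)}\}_{k_{n+1},k_n}=-\delta_n\log\theta^{(n)}_{k_n,k_{n+1}}$, and set $A_{(N+1)}:=0$. If $\min\{\epsilon_n: n=1,\dots,N+1\}>\max\{\|A_{(n)}\|_2+\|A_{(n+1)}\|_2: n=1,\dots,N\}$, then the EON objective $L$, viewed as a function of $(\gamma_{(1)},\dots,\gamma_{(N+1)})\in\mathbb{P}_L^{K_1\times T}\times\dots\times\mathbb{P}_L^{K_{N+1}\times T}$, is strictly convex, and consequently its minimizer $\hat\Gamma$ is unique.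
   Context: $\mathbb{P}^K$ is the probability simplex; $\mathbb{P}_L^{a\times b}$ are $a\times b$ matrices with all columns in $\mathbb{P}^a$. $\|\cdot\|_2$ is the spectral norm. Data $X(1),\dots,X(T)\in\mathbb{R}^{K_0}$, $\gamma_{(0)}\in\mathbb{R}^{K_0\times T}$ nonnegative, $\delta_n>0$, $\epsilon_n>0$. Natural logarithms with $0\log0=0$. The EON objective is $L=\sum_{t=1}^T\Big(\sum_{k_1}\{\gamma_{(1)}\}_{k_1,t}\sum_{d}\{\gamma_{(0)}\}_{d,t}(\{X(t)\}_d-S_{d,k_1})^2-\sum_{n=1}^N\delta_n\sum_{k_n,k_{n+1}}\{\gamma_{(n)}\}_{k_n,t}\{\gamma_{(n+1)}\}_{k_{n+1},t}\log\theta^{(n)}_{k_n,k_{n+1}}+\sum_{n=0}^{N+1}\epsilon_n\sum_{k_n}\{\gamma_{(n)}\}_{k_n,t}\log\{\gamma_{(n)}\}_{k_n,t}\Big)$. *)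

From HB Require Import structures.
From mathcomp Require Import all_boot all_order all_algebra.
From mathcomp Require Import all_classical all_reals all_analysis.
Set Implicit Arguments. Unset Strict Implicit. Unset Printing Implicit Defensive.
Import Order.TTheory GRing.Theory Num.Theory.
Local Open Scope ring_scope.
Local Open Scope classical_set_scope.

Section EON.
Variable R : realType.

Definition xlogx (x : R) : R := if x == 0 then 0 else x * ln x.

Definition vnorm2 (n : nat) (v : 'cV[R]_n) : R :=
  Num.sqrt (\sum_(i < n) v i 0 ^+ 2).

Definition specnorm (m n : nat) (A : 'M[R]_(m, n)) : R :=
  sup [set r | exists v : 'cV[R]_n, vnorm2 v <= 1 /\ r = vnorm2 (A *m v)].

(* A matrix lies in P_L^{a x b}: every column lies in the probability simplex *)
Definition colstoch (a b : nat) (M : 'M[R]_(a, b)) : Prop :=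
  (forall i j, 0 <= M i j) /\ (forall j, \sum_(i < a) M i j = 1).

Definition nextord (N : nat) (i : 'I_N) : 'I_N.+1 := @Ordinal N.+1 i.+1 (ltn_ord i).
Definition prevord (N : nat) (i : 'I_N) : 'I_N.+1 := widen_ord (leqnSn N) i.

(* Indexing conventions: layer sizes K n for n = 0..N+1;
   theta i (i : 'I_N) is theta^(i+1), a K_(i+1) x K_(i+2) matrix;
   G j (j : 'I_N.+1) is gamma_(j+1), a K_(j+1) x T matrix;
   delta n, eps n use the paper's natural indices. *)

Definition Amat (N : nat) (K : nat -> nat) (delta : nat -> R)
  (theta : forall i : 'I_N, 'M[R]_(K i.+1, K i.+2)) (i : 'I_N)
  : 'M[R]_(K i.+2, K i.+1) :=
  \matrix_(k' < K i.+2, k < K i.+1) (- delta i.+1 * ln (theta i k k')).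

(* normA m = ||A_(m+1)||_2 for m < N, and 0 otherwise (in particular A_(N+1) := 0) *)
Definition normA (N : nat) (K : nat -> nat) (delta : nat -> R)
  (theta : forall i : 'I_N, 'M[R]_(K i.+1, K i.+2)) (m : nat) : R :=
  match (insub m : option 'I_N) with
  | Some i => specnorm (Amat delta theta i)
  | None => 0
  end.

Definition EON_L (N T : nat) (K : nat -> nat) (X : 'M[R]_(K 0%N, T))
  (S : 'M[R]_(K 0%N, K 1%N)) (gamma0 : 'M[R]_(K 0%N, T))
  (delta eps : nat -> R) (theta : forall i : 'I_N, 'M[R]_(K i.+1, K i.+2))
  (G : forall j : 'I_N.+1, 'M[R]_(K j.+1, T)) : R :=
  \sum_(t < T)
    ( \sum_(k1 < K 1) (G ord0 k1 t) *
          (\sum_(d < K 0) gamma0 d t * (X d t - S d k1) ^+ 2)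
    - \sum_(i < N) delta i.+1 *
          (\sum_(k < K i.+1) \sum_(k' < K i.+2)
              (G (prevord i) k t) * (G (nextord i) k' t) * ln (theta i k k'))
    + ( eps 0 * \sum_(d < K 0) xlogx (gamma0 d t)
      + \sum_(j < N.+1) eps j.+1 * \sum_(k < K j.+1) xlogx (G j k t))).

End EON.

From Pilot Require Import Defs.
From HB Require Import structures.
From mathcomp Require Import all_boot all_order all_algebra.
From mathcomp Require Import all_classical all_reals all_analysis.
From mathcomp Require Import ring lra.
Import Order.TTheory GRing.Theory Num.Theory numFieldNormedType.Exports.
Set Implicit Arguments. Unset Strict Implicit. Unset Printing Implicit Defensive.
Local Open Scope ring_scope.

(** Let D = G - G'.  Along the segment from G' to G the data term of L is linear and
    the coupling term is quadratic, so for each t the convexity gap of L at lam is the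
    entropy gap plus lam (1 - lam) sum_n D_(n+1)^T A_(n) D_(n).  Since x log x - x^2/2
    is convex on [0, 1] (its second derivative is 1/x - 1), the entropy gap is at least
    lam (1 - lam)/2 sum_n eps_n |D_n|^2; by AM-GM and the spectral norm,
    2 u^T A v >= - ||A|| (|u|^2 + |v|^2), so the coupling part is at least
    - lam (1 - lam)/2 sum_n (||A_(n)|| + ||A_(n-1)||) |D_n|^2.  The hypothesis on eps
    therefore makes the gap positive as soon as D <> 0.  A minimizer exists because the
    product of simplices is compact and L is continuous (x log x is continuous at 0),
    and strict convexity at the midpoint of two minimizers makes it unique. *)

Section xlogx.
Variable R : realType.
Implicit Types x y t lam : R.

Lemma xlogxE x : xlogx x = x * ln x.
Proof. by rewrite /xlogx; case: eqP => [->|]; rewrite ?mul0r. Qed.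

Lemma xlogx_sqrt_bound t : 0 < t <= 1 -> `|xlogx t| <= 2 * Num.sqrt t.
Proof.
move=> /andP[t0 t1]; rewrite xlogxE.
set s := Num.sqrt t.
have s0 : 0 < s by rewrite sqrtr_gt0.
have st : t = s ^+ 2 by rewrite sqr_sqrtr // ltW.
have lnVs : ln s^-1 < s^-1 by apply: ln_sublinear; rewrite invr_gt0.
rewrite ler0_norm; last by apply: mulr_ge0_le0; [exact: ltW | exact: ln_le0].
rewrite lnV ?posrE // in lnVs.
have -> : - (t * ln t) = 2 * s * (s * - ln s) by rewrite st lnXn // -mulr_natr; ring.
have sln_le1 : s * - ln s <= 1 by rewrite -(mulfV (lt0r_neq0 s0)) ler_pM2l // ltW.
by rewrite -[leRHS]mulr1 ler_pM2l // mulr_gt0.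
Qed.

Lemma continuous_xlogx : continuous (@xlogx R).
Proof.
move=> x; have [x0|x0|->] := ltgtP x 0.
- apply: cvg_near_cst; near=> y.
  rewrite !xlogxE !ln0 ?mulr0 // ltW //; near: y; exact: lt_nbhsl.
- rewrite (_ : @xlogx R = fun y => y * ln y); last by apply: funext => y; rewrite xlogxE.
  by apply: continuousM; [exact: cvg_id | exact: continuous_ln].
- apply/cvgrPdist_le => e e0.
  have e20 : 0 < (e / 2) ^+ 2 by rewrite exprn_gt0 // divr_gt0.
  apply/nbhs_ballP; exists (Num.min 1 ((e / 2) ^+ 2)); first by rewrite /= lt_min ltr01.
  move=> t; rewrite /ball /= sub0r normrN lt_min => /andP[t1 te].
  rewrite [xlogx 0]/xlogx eqxx sub0r normrN.
  have [t0|t0] := lerP t 0; first by rewrite xlogxE ln0 // mulr0 normr0 ltW.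
  rewrite gtr0_norm // in t1 te.
  have := @xlogx_sqrt_bound t; rewrite t0 ltW // => /(_ isT).
  have : Num.sqrt t < e / 2.
    by rewrite -[ltRHS]ger0_norm ?divr_ge0 ?(ltW e0) // -sqrtr_sqr ltr_sqrt.
  lra.
Unshelve. all: by end_near.
Qed.

Lemma continuous_xlogx_comp (T : topologicalType) (f : T -> R) (p : T) :
  {for p, continuous f} -> {for p, continuous (fun q => xlogx (f q))}.
Proof.
by move=> cf; apply: (@continuous_comp _ _ _ f (@xlogx R) p cf); exact: continuous_xlogx.
Qed.

Local Open Scope convex_scope.

Let f (x : R) : R^o := xlogx x - x ^+ 2 / 2.
Let Df (x : R) : R^o := ln x + 1 - x.

Let is_derive_f x : 0 < x -> is_derive x 1 f (Df x).
Proof.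
move=> x0; rewrite /f (_ : @xlogx R = fun y => y * ln y); last first.
  by apply: funext => y; rewrite xlogxE.
have dln := is_derive1_ln x0.
apply: is_derive_eq; rewrite /Df.
change (x * x^-1 + ln x * 1 - (x ^+ 2 * (- 2 ^- 2 * 0) + 2^-1 * (x * 1 + x * 1))
  = ln x + 1 - x).
by rewrite divff ?gt_eqF //; field.
Qed.

Let is_derive_Df x : 0 < x -> is_derive x 1 Df (x^-1 - 1).
Proof.
move=> x0; have dln := is_derive1_ln x0.
by apply: is_derive_eq; rewrite addr0.
Qed.

Let D_f_near x : 0 < x -> {near x, Df =1 'D_1 f}.
Proof.
move=> x0; near=> y; have y0 : 0 < y by near: y; exact: lt_nbhsr.
exact/esym/(@derive_val _ _ _ _ _ _ _ (is_derive_f y0)).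
Unshelve. all: by end_near.
Qed.

Let DDf x : 0 < x -> 'D_1 ('D_1 f) x = x^-1 - 1.
Proof.
move=> x0; rewrite -(near_eq_derive _ (D_f_near x0)).
exact: (@derive_val _ _ _ _ _ _ _ (is_derive_Df x0)).
Qed.

Let continuous_f : continuous f.
Proof.
move=> x; apply: continuousB; first exact: continuous_xlogx.
by apply: continuousM; [apply: continuousM; exact: cvg_id | exact: cst_continuous].
Qed.

Let convex_f_le (t : {i01 R}) (x y : R^o) : 0 <= x -> x <= y -> y <= 1 ->
  f (x <| t |> y) <= f x <| t |> f y.
Proof.
move=> x0 xy y1; apply: second_derivative_convex => //.
- move=> z /andP[xz zy]; rewrite DDf ?subr_ge0 ?invf_ge1; lra.
- exact/cvg_at_left_filter/continuous_f.
- exact/cvg_at_right_filter/continuous_f.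
- move=> z; rewrite in_itv /= => /andP[xz _].
  exact: (@ex_derive _ _ _ _ _ _ _ (is_derive_f (le_lt_trans x0 xz))).
- move=> z; rewrite in_itv /= => /andP[xz _]; have z0 := le_lt_trans x0 xz.
  apply: near_eq_derivable (D_f_near z0) _.
  exact: (@ex_derive _ _ _ _ _ _ _ (is_derive_Df z0)).
Qed.

Lemma xlogx_convex_gap lam x y : 0 <= lam <= 1 -> 0 <= x <= 1 -> 0 <= y <= 1 ->
  lam * (1 - lam) * (x - y) ^+ 2 / 2 <=
  lam * xlogx x + (1 - lam) * xlogx y - xlogx (lam * x + (1 - lam) * y).
Proof.
move=> /andP[l0 l1] /andP[x0 x1] /andP[y0 y1].
have convf : f (lam * x + (1 - lam) * y) <= lam * f x + (1 - lam) * f y.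
  have [xy|/ltW yx] := leP x y.
    by have := convex_f_le (Itv01 l0 l1) x0 xy y1; rewrite !convRE.
  have l0' : 0 <= 1 - lam by rewrite subr_ge0.
  have l1' : 1 - lam <= 1 by rewrite lerBlDr lerDl.
  have := convex_f_le (Itv01 l0' l1') y0 yx x1; rewrite !convRE /= /unstable.onem subKr.
  by rewrite addrC [X in _ <= X]addrC.
have -> : lam * (1 - lam) * (x - y) ^+ 2 / 2 =
    (lam * x ^+ 2 + (1 - lam) * y ^+ 2 - (lam * x + (1 - lam) * y) ^+ 2) / 2 by ring.
move: convf; rewrite /f; lra.
Qed.

End xlogx.

Section spectral_norm.
Variable R : realType.
Implicit Types (m n : nat).

Definition vsqnorm {n} (v : 'cV[R]_n) : R := \sum_(i < n) v i 0 ^+ 2.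

Lemma vsqnorm_ge0 n (v : 'cV[R]_n) : 0 <= vsqnorm v.
Proof. by apply: sumr_ge0 => i _; apply: sqr_ge0. Qed.

Lemma ler_sqr_vsqnorm n (v : 'cV[R]_n) i : v i 0 ^+ 2 <= vsqnorm v.
Proof.
by rewrite /vsqnorm (bigD1 i) //= lerDl; apply: sumr_ge0 => j _; apply: sqr_ge0.
Qed.

Lemma vsqnorm0 n : vsqnorm (0 : 'cV[R]_n) = 0.
Proof. by rewrite /vsqnorm big1 // => i _; rewrite mxE expr0n. Qed.

Lemma vsqnorm_eq0 n (v : 'cV[R]_n) : vsqnorm v = 0 -> v = 0.
Proof.
move=> /psumr_eq0P v0; apply/matrixP => i j; rewrite ord1 mxE.
by apply/eqP; rewrite -sqrf_eq0 v0 // => k _; apply: sqr_ge0.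
Qed.

Lemma vnorm2Z n (c : R) (v : 'cV[R]_n) : vnorm2 (c *: v) = `|c| * vnorm2 v.
Proof.
rewrite /vnorm2 -sqrtr_sqr -sqrtrM ?sqr_ge0 // mulr_sumr.
by congr Num.sqrt; apply: eq_bigr => i _; rewrite mxE exprMn.
Qed.

Lemma specnorm_ub m n (A : 'M[R]_(m, n)) v :
  vnorm2 v <= 1 -> vnorm2 (A *m v) <= specnorm A.
Proof.
move=> v1; apply: ub_le_sup; last by exists v.
exists (Num.sqrt (\sum_(k < m) (\sum_(i < n) `|A k i|) ^+ 2)) => _ [w [w1 ->]].
rewrite ler_sqrt; last by apply: sumr_ge0 => k _; apply: sqr_ge0.
have wi i : `|w i 0| <= 1.
  rewrite -(ler_pXn2r (n := 2)) ?nnegrE // real_normK ?num_real // expr1n.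
  rewrite (le_trans (ler_sqr_vsqnorm w i)) //.
  by rewrite /vnorm2 -sqrtr1 ler_sqrt in w1.
apply: ler_sum => k _; rewrite -real_normK ?num_real // lerXn2r ?nnegrE //.
- by apply: sumr_ge0 => i _.
- rewrite mxE (le_trans (ler_norm_sum _ _ _)) //.
  by apply: ler_sum => i _; rewrite normrM ler_piMr.
Qed.

Lemma specnorm_ge0 m n (A : 'M[R]_(m, n)) : 0 <= specnorm A.
Proof.
apply: le_trans (specnorm_ub A (v := 0) _); first exact: sqrtr_ge0.
by rewrite /vnorm2 -/(vsqnorm 0) vsqnorm0 sqrtr0.
Qed.

Lemma vsqnorm_mulmx_le m n (A : 'M[R]_(m, n)) v :
  vsqnorm (A *m v) <= specnorm A ^+ 2 * vsqnorm v.
Proof.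
have [v0|v_neq0] := eqVneq (vsqnorm v) 0.
  by rewrite v0 (vsqnorm_eq0 v0) mulmx0 vsqnorm0 mulr0.
have nv : 0 < vnorm2 v by rewrite sqrtr_gt0 lt0r v_neq0 vsqnorm_ge0.
have nv_inv : 0 <= (vnorm2 v)^-1 by rewrite invr_ge0 ltW.
have := specnorm_ub A (v := (vnorm2 v)^-1 *: v).
rewrite -scalemxAr !vnorm2Z ger0_norm // mulVf ?gt_eqF // lexx => /(_ isT).
rewrite ler_pdivrMl // mulrC => h.
have := lerXn2r 2 (sqrtr_ge0 _) (mulr_ge0 (specnorm_ge0 A) (ltW nv)) h.
by rewrite exprMn /vnorm2 !sqr_sqrtr ?vsqnorm_ge0.
Qed.

Lemma specnorm_dot_lb m n (A : 'M[R]_(m, n)) u v :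
  - (specnorm A * (vsqnorm u + vsqnorm v)) <= 2 * \sum_(k < m) u k 0 * (A *m v) k 0.
Proof.
set a := specnorm A; set w := A *m v.
have Aw := vsqnorm_mulmx_le A v; rewrite -/a -/w in Aw.
have [a0|a_gt0] := eqVneq a 0.
  have /vsqnorm_eq0 w0 : vsqnorm w = 0.
    by apply/le_anti; rewrite vsqnorm_ge0 andbT; move: Aw; rewrite a0 expr0n mul0r.
  by rewrite a0 w0 mul0r oppr0 big1 ?mulr0 // => k _; rewrite mxE mulr0.
have a_pos : 0 < a by rewrite lt0r a_gt0 specnorm_ge0.
have coord k : - (a * u k 0 ^+ 2 + w k 0 ^+ 2 / a) <= 2 * (u k 0 * w k 0).
  have : 0 <= (a * u k 0 + w k 0) ^+ 2 / a by rewrite divr_ge0 ?sqr_ge0 ?ltW.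
  have -> : (a * u k 0 + w k 0) ^+ 2 / a = a * u k 0 ^+ 2 + 2 * (u k 0 * w k 0) + w k 0 ^+ 2 / a.
    by field.
  lra.
have : \sum_(k < m) - (a * u k 0 ^+ 2 + w k 0 ^+ 2 / a) <= \sum_(k < m) 2 * (u k 0 * w k 0).
  by apply: ler_sum => k _; exact: coord.
rewrite sumrN big_split -!mulr_sumr -mulr_suml -/(vsqnorm u) -/(vsqnorm w) /=.
have : vsqnorm w / a <= a * vsqnorm v by rewrite ler_pdivrMr // mulrAC -expr2.
lra.
Qed.

End spectral_norm.

Lemma sumr_comb (R : comPzRingType) (I : Type) (r : seq I) (a b : R) (F F' H : I -> R) :
  a * \sum_(i <- r) F i + b * \sum_(i <- r) F' i - \sum_(i <- r) H i =
  \sum_(i <- r) (a * F i + b * F' i - H i).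
Proof. by rewrite !mulr_sumr -big_split -sumrB. Qed.

Section colstoch.
Variable R : realType.
Implicit Types (a b : nat).

Lemma colstoch_entry a b (M : 'M[R]_(a, b)) i j : colstoch M -> 0 <= M i j <= 1.
Proof.
case=> M0 M1; rewrite M0 -(M1 j) (bigD1 i) //= lerDl.
by apply: sumr_ge0 => l _.
Qed.

Lemma colstoch_mix a b (M M' : 'M[R]_(a, b)) lam : 0 <= lam <= 1 ->
  colstoch M -> colstoch M' -> colstoch (lam *: M + (1 - lam) *: M').
Proof.
move=> /andP[l0 l1] [M0 M1] [M'0 M'1]; split=> [i j|j].
  by rewrite !mxE addr_ge0 // mulr_ge0 // subr_ge0.
under eq_bigr => i _ do rewrite !mxE.
by rewrite big_split /= -!mulr_sumr M1 M'1 !mulr1 subrKC.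
Qed.

End colstoch.

Section EON_strict_convexity.
Variable R : realType.
Variables (N T : nat) (K : nat -> nat) (X : 'M[R]_(K 0%N, T))
  (S : 'M[R]_(K 0%N, K 1%N)) (gamma0 : 'M[R]_(K 0%N, T)) (delta eps : nat -> R)
  (theta : forall i : 'I_N, 'M[R]_(K i.+1, K i.+2)).

Local Notation layers := (forall j : 'I_N.+1, 'M[R]_(K j.+1, T)).
Local Notation L := (EON_L X S gamma0 delta eps theta).
Local Notation normA := (normA delta theta).
Implicit Types (lam : R).

Definition mix_layers lam (G G' : layers) : layers := fun j => lam *: G j + (1 - lam) *: G' j.

Lemma mix_layersE lam (G G' : layers) j k t :
  mix_layers lam G G' j k t = lam * G j k t + (1 - lam) * G' j k t.
Proof. by rewrite !mxE. Qed.

Definition layer_diff (G G' : layers) (t : 'I_T) (j : 'I_N.+1) : 'cV[R]_(K j.+1) :=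
  \col_k (G j k t - G' j k t).

Definition entropy_gap lam (G G' : layers) t := \sum_(j < N.+1) eps j.+1 * \sum_(k < K j.+1)
  (lam * xlogx (G j k t) + (1 - lam) * xlogx (G' j k t) - xlogx (mix_layers lam G G' j k t)).

Definition coupling (G G' : layers) t := \sum_(i < N) \sum_(k < K i.+2)
  layer_diff G G' t (nextord i) k 0 * (Amat delta theta i *m layer_diff G G' t (prevord i)) k 0.

Lemma coupling_termE (G G' : layers) t (i : 'I_N) :
  \sum_(k < K i.+2) layer_diff G G' t (nextord i) k 0 *
    (Amat delta theta i *m layer_diff G G' t (prevord i)) k 0 =
  - (delta i.+1 * \sum_(k < K i.+1) \sum_(k' < K i.+2)
      (G (prevord i) k t - G' (prevord i) k t) *
      (G (nextord i) k' t - G' (nextord i) k' t) * ln (theta i k k')).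
Proof.
under eq_bigr => k' _ do rewrite [X in _ * X]mxE mulr_sumr.
rewrite exchange_big mulr_sumr -sumrN; apply: eq_bigr => k _.
rewrite mulr_sumr -sumrN; apply: eq_bigr => k' _.
by rewrite !mxE; ring.
Qed.

Lemma EON_L_mix_gap lam (G G' : layers) :
  lam * L G + (1 - lam) * L G' - L (mix_layers lam G G') =
  \sum_(t < T) (entropy_gap lam G G' t + lam * (1 - lam) * coupling G G' t).
Proof.
have split_gap (lam' a b c e a' b' e' a'' b'' e'' : R) :
    lam' * (a - b + (c + e)) + (1 - lam') * (a' - b' + (c + e')) - (a'' - b'' + (c + e'')) =
    (lam' * a + (1 - lam') * a' - a'') - (lam' * b + (1 - lam') * b' - b'') +
    (lam' * e + (1 - lam') * e' - e'') by ring.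
rewrite sumr_comb; apply: eq_bigr => t _; rewrite split_gap.
rewrite sumr_comb big1 ?sub0r => [|k _]; last by rewrite mix_layersE; ring.
rewrite addrC; congr (_ + _).
  rewrite sumr_comb; apply: eq_bigr => j _.
  by rewrite -sumr_comb; ring.
rewrite sumr_comb /coupling mulr_sumr -sumrN; apply: eq_bigr => i _.
have factor_gap (c F F' H : R) :
  lam * (c * F) + (1 - lam) * (c * F') - c * H = c * (lam * F + (1 - lam) * F' - H) by ring.
rewrite coupling_termE mulrN factor_gap mulrCA; congr (- (_ * _)).
rewrite sumr_comb mulr_sumr; apply: eq_bigr => k _.
rewrite sumr_comb mulr_sumr; apply: eq_bigr => k' _.
by rewrite !mix_layersE; ring.
Qed.

Lemma entropy_gap_lb lam (G G' : layers) t : 0 <= lam <= 1 ->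
  (forall j, colstoch (G j)) -> (forall j, colstoch (G' j)) ->
  (forall j : 'I_N.+1, 0 <= eps j.+1) ->
  lam * (1 - lam) / 2 * \sum_(j < N.+1) eps j.+1 * vsqnorm (layer_diff G G' t j) <=
  entropy_gap lam G G' t.
Proof.
move=> lam01 dG dG' eps0; rewrite mulr_sumr; apply: ler_sum => j _.
rewrite mulrCA ler_wpM2l // /vsqnorm mulr_sumr; apply: ler_sum => k _.
have := xlogx_convex_gap lam01 (colstoch_entry k t (dG j)) (colstoch_entry k t (dG' j)).
by rewrite mxE mix_layersE; lra.
Qed.

(* ||A_(j+1)|| + ||A_(j)|| in the paper's indexing, where ||A_(0)|| := 0. *)
Definition coupling_weight (j : nat) : R :=
  normA j + (if j is n.+1 then normA n else 0).

Lemma normA_ge0 m : 0 <= normA m.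
Proof. by rewrite /Defs.normA; case: insub => // i; exact: specnorm_ge0. Qed.

Lemma normA_ord (i : 'I_N) : normA i = specnorm (Amat delta theta i).
Proof. by rewrite /normA valK. Qed.

Lemma coupling_weight_lt_eps :
  (forall (n : 'I_N) (m : nat), (1 <= m <= N.+1)%N -> normA n + normA n.+1 < eps m) ->
  0 < eps 1 -> forall j : 'I_N.+1, coupling_weight j < eps j.+1.
Proof.
move=> hcond eps1 [[|j] /= j_lt]; rewrite /coupling_weight /=.
  rewrite addr0; have [N0|N_gt0] := posnP N; first by rewrite /Defs.normA insubN ?N0.
  by have := hcond (Ordinal N_gt0) 1%N isT; have := normA_ge0 1; lra.
by rewrite addrC; apply: (hcond (@Ordinal N j j_lt)).
Qed.

Lemma sum_coupling_weight (F : 'I_N.+1 -> R) :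
  \sum_(j < N.+1) coupling_weight j * F j =
  \sum_(i < N) specnorm (Amat delta theta i) * (F (prevord i) + F (nextord i)).
Proof.
have normA_N : normA N = 0 by rewrite /normA insubN ?ltnn.
under eq_bigr => j _ do rewrite mulrDl.
rewrite big_split /= [X in X + _]big_ord_recr [X in _ + X]big_ord_recl /=.
rewrite normA_N !mul0r addr0 add0r -big_split /=.
apply: eq_bigr => i _; rewrite mulrDr normA_ord; congr (_ + _ * F _).
exact: val_inj.
Qed.

Lemma coupling_lb (G G' : layers) t :
  - (\sum_(j < N.+1) coupling_weight j * vsqnorm (layer_diff G G' t j)) <=
  2 * coupling G G' t.
Proof.
rewrite sum_coupling_weight /coupling mulr_sumr -sumrN; apply: ler_sum => i _.
by rewrite addrC; apply: specnorm_dot_lb.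
Qed.

Lemma layer_diff_eq0 (G G' : layers) : (forall t j, layer_diff G G' t j = 0) -> G = G'.
Proof.
move=> dG0; apply: functional_extensionality_dep => j; apply/matrixP => k t.
by apply/eqP; rewrite -subr_eq0; have /matrixP/(_ k 0) := dG0 t j; rewrite !mxE => ->.
Qed.

Lemma EON_L_strictly_convex lam (G G' : layers) : 0 < lam < 1 ->
  (forall j, colstoch (G j)) -> (forall j, colstoch (G' j)) -> G <> G' ->
  (forall j : 'I_N.+1, coupling_weight j < eps j.+1) ->
  L (mix_layers lam G G') < lam * L G + (1 - lam) * L G'.
Proof.
move=> /andP[l0 l1] dG dG' GG' weps.
have w0 j : 0 <= coupling_weight j.
  by rewrite addr_ge0 ?normA_ge0 //; case: j => [|j] //; exact: normA_ge0.
have lam_pos : 0 < lam * (1 - lam) / 2 by rewrite !mulr_gt0 ?subr_gt0.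
pose Q := \sum_(t < T) \sum_(j < N.+1)
  (eps j.+1 - coupling_weight j) * vsqnorm (layer_diff G G' t j).
have Q_term_ge0 t (j : 'I_N.+1) :
    0 <= (eps j.+1 - coupling_weight j) * vsqnorm (layer_diff G G' t j).
  by rewrite mulr_ge0 ?vsqnorm_ge0 // subr_ge0 ltW.
have Q_gt0 : 0 < Q.
  rewrite lt0r sumr_ge0 ?andbT => [|t _]; last by apply: sumr_ge0.
  apply/eqP => Q0; apply/GG'/layer_diff_eq0 => t j.
  have /(_ t isT) sum_t0 := psumr_eq0P (fun t _ => sumr_ge0 _ (fun j _ => Q_term_ge0 t j)) Q0.
  have /(_ j isT)/eqP := psumr_eq0P (fun j _ => Q_term_ge0 t j) sum_t0.
  by rewrite mulf_eq0 subr_eq0 gt_eqF //= => /eqP/vsqnorm_eq0.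
rewrite -subr_gt0 EON_L_mix_gap; apply: lt_le_trans (mulr_gt0 lam_pos Q_gt0) _.
rewrite mulr_sumr; apply: ler_sum => t _.
have lam01 : 0 <= lam <= 1 by rewrite !ltW.
have eps0 (j : 'I_N.+1) : 0 <= eps j.+1 := le_trans (w0 j) (ltW (weps j)).
have ent_lb := entropy_gap_lb t lam01 dG dG' eps0.
have coup_lb := ler_wpM2l (ltW lam_pos) (coupling_lb G G' t).
under eq_bigr => j _ do rewrite mulrBl.
rewrite sumrB mulrBr; lra.
Qed.

End EON_strict_convexity.

Local Open Scope classical_set_scope.

Lemma continuous_sum (T : topologicalType) (R : realType) (I : Type) (r : seq I)
    (F : I -> T -> R) x :
  (forall i, {for x, continuous (F i)}) -> {for x, continuous (fun y => \sum_(i <- r) F i y)}.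
Proof.
move=> cF; elim: r => [|i r IHr].
  rewrite (_ : (fun y => _) = fun=> 0); first exact: cst_continuous.
  by apply: funext => y; rewrite big_nil.
rewrite (_ : (fun y => _) = fun y => F i y + \sum_(j <- r) F j y); first exact: continuousD.
by apply: funext => y; rewrite big_cons.
Qed.

Lemma closed_forall (T : topologicalType) (I : Type) (F : I -> set T) :
  (forall i, closed (F i)) -> closed [set x | forall i, F i x].
Proof.
move=> cF; rewrite (_ : [set x | _] = \bigcap_(i in setT) F i); first exact: closed_bigI.
by apply/seteqP; split=> [x Fx i _ | x Fx i]; apply: Fx.
Qed.

Section EON_minimizer.
Variable R : realType.
Variables (N T : nat) (K : nat -> nat) (X : 'M[R]_(K 0%N, T))
  (S : 'M[R]_(K 0%N, K 1%N)) (gamma0 : 'M[R]_(K 0%N, T)) (delta eps : nat -> R)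
  (theta : forall i : 'I_N, 'M[R]_(K i.+1, K i.+2)).

Local Notation layers := (forall j : 'I_N.+1, 'M[R]_(K j.+1, T)).
Local Notation L := (EON_L X S gamma0 delta eps theta).

(* Layers as coordinates of a row vector, where closed bounded sets are compact. *)
Definition layer_entry := {j : 'I_N.+1 & ('I_(K j.+1) * 'I_T)%type}.
Local Notation dim := #|{: layer_entry}|.

Definition unflatten (v : 'rV[R]_dim) : layers :=
  fun j => \matrix_(k, t) v 0 (enum_rank (Tagged _ (k, t) : layer_entry)).

Definition flatten (G : layers) : 'rV[R]_dim :=
  \row_p let: existT j (k, t) := enum_val p in G j k t.

Lemma flattenK : cancel flatten unflatten.
Proof.
move=> G; apply: functional_extensionality_dep => j; apply/matrixP => k t.
by rewrite !mxE enum_rankK.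
Qed.

Lemma continuous_unflatten j k t : continuous (fun v : 'rV[R]_dim => unflatten v j k t).
Proof.
rewrite (_ : (fun v : 'rV[R]_dim => _) = fun v => v 0 (enum_rank (Tagged _ (k, t) : layer_entry))).
  exact: coord_continuous.
by apply: funext => v; rewrite mxE.
Qed.

Definition simplex_layers := [set v : 'rV[R]_dim | forall j, colstoch (unflatten v j)].

Lemma simplex_layers_neq0 : (forall j : 'I_N.+1, (0 < K j.+1)%N) -> simplex_layers !=set0.
Proof.
move=> K_pos; exists (flatten (fun j => const_mx (K j.+1)%:R^-1)) => j.
rewrite /= flattenK; split=> [k t|t]; first by rewrite mxE invr_ge0 ler0n.
under eq_bigr => k _ do rewrite mxE.
by rewrite sumr_const card_ord -(mulr_natr (K j.+1)%:R^-1) mulVf // pnatr_eq0 -lt0n.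
Qed.

Lemma simplex_layers_entry v p : simplex_layers v -> 0 <= v 0 p <= 1.
Proof.
move=> /(_ (tag (enum_val p))) /(colstoch_entry (tagged (enum_val p)).1 (tagged (enum_val p)).2).
by rewrite mxE; case: (enum_val p) (enum_valK p) => j [k t] /= ->.
Qed.

Lemma bounded_simplex_layers : bounded_set simplex_layers.
Proof.
exists 1; split=> [|r r1 v /simplex_layers_entry v01]; first exact: num_real.
rewrite /= [X in X <= _]/Num.Def.normr /= mx_normrE; apply: bigmax_le => [|[i p] _ /=].
  by rewrite ltW // (lt_trans ltr01).
have /andP[v0 v1] := v01 p; rewrite ord1 ger0_norm //; lra.
Qed.

Lemma closed_simplex_layers : closed simplex_layers.
Proof.
apply: closed_forall => j; apply: closedI.
  apply: closed_forall => k; apply: closed_forall => t.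
  apply: (@preimage_closed _ _ (fun v => unflatten v j k t) [set y | 0 <= y]).
    by move=> v _; apply: continuous_unflatten.
  exact: closed_ge.
apply: closed_forall => t.
apply: (@preimage_closed _ _ (fun v => \sum_k unflatten v j k t) [set y | y = 1]).
  by move=> v _; apply: continuous_sum => k; apply: continuous_unflatten.
exact: closed_eq.
Qed.

Lemma simplex_layers_minimizer (F : layers -> R) :
  (forall j : 'I_N.+1, (0 < K j.+1)%N) -> continuous (fun v => F (unflatten v)) ->
  exists2 G : layers, (forall j, colstoch (G j)) &
    forall G' : layers, (forall j, colstoch (G' j)) -> F G <= F G'.
Proof.
move=> K_pos F_cont.
have [v] := EVT_min_rV (simplex_layers_neq0 K_pos)
  (bounded_closed_compact bounded_simplex_layers closed_simplex_layers)
  (continuous_subspaceT F_cont).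
rewrite inE => v_simplex v_min; exists (unflatten v) => // G dG.
by rewrite -[G]flattenK; apply: v_min; rewrite inE /simplex_layers /= flattenK.
Qed.

Lemma continuous_EON_L_unflatten : continuous (fun v => L (unflatten v)).
Proof.
move=> v; rewrite /EON_L.
repeat first [ apply: continuous_sum => ? | apply: cst_continuous | apply: continuousD
  | apply: continuousB | apply: continuousN | apply: continuousM
  | apply: continuous_xlogx_comp | apply: continuous_unflatten ].
Qed.

End EON_minimizer.

Theorem lemma7 (R : realType) (N T : nat) (K : nat -> nat)
  (X : 'M[R]_(K 0%N, T)) (S : 'M[R]_(K 0%N, K 1%N)) (gamma0 : 'M[R]_(K 0%N, T))
  (delta eps : nat -> R)
  (theta : forall i : 'I_N, 'M[R]_(K i.+1, K i.+2))
  (K_pos : forall n : nat, (n <= N.+1)%N -> (0 < K n)%N)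
  (gamma0_ge0 : forall d t, 0 <= gamma0 d t)
  (delta_gt0 : forall n : nat, (1 <= n <= N)%N -> 0 < delta n)
  (eps_gt0 : forall n : nat, (n <= N.+1)%N -> 0 < eps n)
  (theta_col : forall i : 'I_N, colstoch (theta i))
  (theta_pos : forall (i : 'I_N) k k', 0 < theta i k k')
  (hcond : forall (n : 'I_N) (m : nat), (1 <= m <= N.+1)%N ->
      normA delta theta n + normA delta theta n.+1 < eps m) :
  let L := EON_L X S gamma0 delta eps theta in
  let dom := fun G : forall j : 'I_N.+1, 'M[R]_(K j.+1, T) =>
               forall j, colstoch (G j) in
  (* strict convexity on the product of the P_L's *)
  (forall (G G' : forall j : 'I_N.+1, 'M[R]_(K j.+1, T)) (lam : R),
      dom G -> dom G' -> G <> G' -> 0 < lam < 1 ->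
      L (fun j => lam *: G j + (1 - lam) *: G' j) < lam * L G + (1 - lam) * L G')
  /\
  (* existence and uniqueness of the minimizer *)
  (exists Ghat : forall j : 'I_N.+1, 'M[R]_(K j.+1, T),
      dom Ghat /\ (forall G, dom G -> L Ghat <= L G) /\
      (forall G, dom G -> (forall G', dom G' -> L G <= L G') -> G = Ghat)).
Proof.
move=> L dom.
have K_pos' (j : 'I_N.+1) : (0 < K j.+1)%N by apply: K_pos; exact: ltn_ord.
have weps := coupling_weight_lt_eps hcond (eps_gt0 1%N isT).
have L_strict G G' lam : dom G -> dom G' -> G <> G' -> 0 < lam < 1 ->
    L (fun j => lam *: G j + (1 - lam) *: G' j) < lam * L G + (1 - lam) * L G'.
  by move=> dG dG' GG' lam01; apply: EON_L_strictly_convex.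
split=> //.
have L_cont : continuous (fun v => L (unflatten v)) by exact: continuous_EON_L_unflatten.
have [Ghat dGhat Ghat_min] := simplex_layers_minimizer K_pos' L_cont.
exists Ghat; split=> //; split=> // G dG G_min; apply: contrapT => GGhat.
have half01 : 0 < (2 : R)^-1 < 1 by rewrite invr_gt0 ltr0n invf_lt1 ?ltr1n.
have dmid : dom (fun j => 2^-1 *: G j + (1 - 2^-1) *: Ghat j).
  by move=> j; apply: colstoch_mix; rewrite // ?invr_ge0 ?ler0n // invf_le1 ?ler1n.
have := L_strict _ _ _ dG dGhat GGhat half01.
have := G_min _ dmid; have := G_min _ dGhat; have := Ghat_min _ dG.
rewrite /L; lra.
Qed.
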